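(* For $n\in\mathbb{N}^\star$ and $x\ge0$ let $\phi_n(x)=\int_0^\pi e^{-2x\sin\eta}e^{2in\eta}\,\mathrm{d}\eta$. Then for every $n\ge1$ and every $x>0$ we have $\phi_n(x)>0$, and for every fixed $x>0$ the sequence $n\mapsto\phi_n(x)$ is strictly decreasing.
   Context: The function $\phi_n$ is real-valued (its imaginary part vanishes by the symmetry $\eta\mapsto\pi-\eta$). *)

From Stdlib Require Export Reals.
From Coquelicot Require Export Coquelicot.
Open Scope R_scope.

Definition phi_integrand (n : nat) (x : R) (eta : R) : C :=
  Cmult (RtoC (exp (- 2 * x * sin eta)))
        (cos (2 * INR n * eta), sin (2 * INR n * eta)).

Definition phi (n : nat) (x : R) : C :=
  RInt (V := C_R_CompleteNormedModule) (phi_integrand n x) 0 PI.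

From Stdlib Require Import Reals Lra Psatz.
From Coquelicot Require Import Coquelicot.
Open Scope R_scope.

(* Im phi_n vanishes because eta |-> PI - eta maps the imaginary part of the
   integrand to its negative.  Re phi_n > 0 by integrating by parts with a
   primitive chosen so that the boundary terms vanish and the remainder is
   nonnegative.  For the monotonicity, Re phi_n - Re phi_(n+1) = 2 W with
   W(x) = int_0^PI sin eta sin (m eta) e^(-2 x sin eta) d eta and m = 2n + 1.
   Differentiating under the integral and integrating an exact derivative gives
   x^2 W'' + 3 x W' - (4 x^2 + m^2 - 1) W = - 4 x P with
   P(x) = int_0^PI sin (m eta) e^(-2 x sin eta) d eta > 0, so W'' < 0 at every
   critical point where W <= 0: W has no nonpositive interior minimum on
   (0, oo).  As W(0) = 0 and W(x) = O(1/x), this forces W > 0. *)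

Lemma RInt_antiderivative_remainder (f G h : R -> R) a b :
  (forall t, is_derive G t (f t - h t)) ->
  (forall t, continuous f t) -> (forall t, continuous h t) ->
  RInt f a b = G b - G a + RInt h a b.
Proof.
  intros HG Hf Hh.
  assert (Hfh : is_RInt (fun t => f t - h t) a b (minus (G b) (G a))).
  { apply (is_RInt_derive (V := R_CompleteNormedModule)); intros t _; [apply HG|].
    apply (continuous_minus (K := R_AbsRing) (V := R_NormedModule)); auto. }
  rewrite (RInt_ext (V := R_CompleteNormedModule) f (fun t => plus (f t - h t) (h t)))
    by (intros; unfold plus; simpl; ring).
  rewrite (RInt_plus (V := R_CompleteNormedModule)), (is_RInt_unique _ _ _ _ Hfh).
  - reflexivity.
  - exists (minus (G b) (G a)); exact Hfh.
  - apply (ex_RInt_continuous (V := R_CompleteNormedModule)); auto.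
Qed.

Lemma neg_right_of_root (f : R -> R) x l :
  is_derive f x l -> f x = 0 -> l < 0 ->
  exists d, 0 < d /\ forall c, x < c < x + d -> f c < 0.
Proof.
  intros Hf Hx0 Hl. apply is_derive_Reals in Hf.
  destruct (Hf (- l / 2)) as [d Hd]; [lra|].
  exists d; split; [apply cond_pos|]. intros c Hc.
  specialize (Hd (c - x)). replace (x + (c - x)) with c in Hd by ring.
  rewrite Hx0, Rminus_0_r in Hd.
  assert (Hquot : Rabs (f c / (c - x) - l) < - l / 2)
    by (apply Hd; [lra | rewrite Rabs_right; lra]).
  apply Rabs_def2 in Hquot.
  assert (f c = f c / (c - x) * (c - x)) by (field; lra).
  nra.
Qed.

Section MaximumPrinciple.

Variables W dW d2W : R -> R.
Hypothesis W_derive : forall x, is_derive W x (dW x).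
Hypothesis dW_derive : forall x, is_derive dW x (d2W x).

Lemma lt_right_of_concave_critical x eps :
  dW x = 0 -> d2W x < 0 -> 0 < eps -> exists z, x < z < x + eps /\ W z < W x.
Proof.
  intros Hcrit Hconc Heps.
  destruct (neg_right_of_root dW x (d2W x) (dW_derive x) Hcrit Hconc) as [d [Hd HdW]].
  pose proof (Rmin_pos d eps Hd Heps). pose proof (Rmin_l d eps). pose proof (Rmin_r d eps).
  set (z := x + Rmin d eps / 2).
  destruct (MVT_cor2 W dW x z) as [c [Hmvt Hc]].
  - unfold z; lra.
  - intros c _; apply is_derive_Reals, W_derive.
  - exists z; split; [unfold z; lra|].
    assert (dW c < 0) by (apply HdW; unfold z in Hc; lra).
    assert (0 < z - x) by (unfold z; lra).
    nra.
Qed.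

Hypothesis concave_at_nonpos_critical :
  forall x, 0 < x -> dW x = 0 -> W x <= 0 -> d2W x < 0.

Lemma no_nonpos_interior_min x a b :
  0 < x -> a < x < b -> W x <= 0 -> ~ (forall c, a < c < b -> W x <= W c).
Proof.
  intros Hx Hab HWx Hmin.
  assert (Hcrit : dW x = 0).
  { exact (deriv_minimum W a b x (exist _ (dW x) (proj1 (is_derive_Reals _ _ _) (W_derive x)))
             (proj1 Hab) (proj2 Hab) (fun c Hac Hcb => Hmin c (conj Hac Hcb))). }
  destruct (lt_right_of_concave_critical x (b - x) Hcrit
              (concave_at_nonpos_critical x Hx Hcrit HWx)) as [z [Hz HWz]]; [lra|].
  assert (W x <= W z) by (apply Hmin; lra).
  lra.
Qed.

Lemma pos_of_vanishing_at_0_and_infinity C :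
  W 0 = 0 -> (forall x, 0 < x -> Rabs (W x) <= C / x) -> forall x, 0 < x -> 0 < W x.
Proof.
  intros HW0 Hdecay.
  assert (HC : 0 <= C).
  { pose proof (Hdecay 1 Rlt_0_1) as H1. rewrite Rdiv_1_r in H1.
    pose proof (Rabs_pos (W 1)); lra. }
  assert (Hnonneg : forall y, 0 < y -> 0 <= W y).
  { intros y Hy. destruct (Rle_lt_dec 0 (W y)) as [|Hneg]; [assumption|exfalso].
    (* past [X] the decay bound forces [W y < W X], so the minimum of [W] on
       [0, X] is interior *)
    set (X := y + C / (- W y) + 1).
    assert (HCW : 0 <= C / (- W y)) by (apply Rdiv_le_0_compat; lra).
    assert (HWX : W y < W X).
    { pose proof (Hdecay X ltac:(unfold X; lra)) as HX.
      pose proof (Rle_abs (- W X)) as HX'; rewrite Rabs_Ropp in HX'.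
      assert (C / X < - W y).
      { apply (Rmult_lt_reg_r X); [unfold X; lra|].
        replace (C / X * X) with C by (field; unfold X; lra).
        replace C with (C / (- W y) * (- W y)) at 1 by (field; lra).
        unfold X; nra. }
      lra. }
    destruct (continuity_ab_min W 0 X) as [x0 [Hmin Hx0]]; [unfold X; lra| |].
    { intros c _. apply derivable_continuous_pt. exists (dW c). apply is_derive_Reals, W_derive. }
    assert (W x0 <= W y) by (apply Hmin; unfold X; lra).
    assert (x0 <> 0) by (intros ->; lra).
    assert (x0 <> X) by (intros ->; lra).
    apply (no_nonpos_interior_min x0 0 X); [lra | lra | lra |].
    intros c Hc; apply Hmin; lra. }
  intros x Hx. destruct (Rle_lt_or_eq_dec _ _ (Hnonneg x Hx)) as [|Heq]; [assumption|exfalso].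
  apply (no_nonpos_interior_min x 0 (2 * x)); [lra | lra | lra |].
  intros c Hc. rewrite <- Heq. apply Hnonneg; lra.
Qed.

End MaximumPrinciple.

Lemma sin_even_mult_PI n : sin (2 * INR n * PI) = 0.
Proof. rewrite <- (Rplus_0_l (2 * INR n * PI)), sin_period; apply sin_0. Qed.

Lemma cos_even_mult_PI n : cos (2 * INR n * PI) = 1.
Proof. rewrite <- (Rplus_0_l (2 * INR n * PI)), cos_period; apply cos_0. Qed.

Lemma sin_odd_mult_PI n : sin ((2 * INR n + 1) * PI) = 0.
Proof.
  replace ((2 * INR n + 1) * PI) with (PI + 2 * INR n * PI) by ring.
  rewrite sin_period; apply sin_PI.
Qed.

Lemma cos_odd_mult_PI n : cos ((2 * INR n + 1) * PI) = -1.
Proof.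
  replace ((2 * INR n + 1) * PI) with (PI + 2 * INR n * PI) by ring.
  rewrite cos_period; apply cos_PI.
Qed.

Lemma cos_odd_mult_PI2 n : cos ((2 * INR n + 1) * (PI / 2)) = 0.
Proof. apply cos_eq_0_1; exists (Z.of_nat n); rewrite <- INR_IZR_INZ; field. Qed.

Lemma cos_sub_cos m t : cos ((m - 1) * t) - cos ((m + 1) * t) = 2 * sin t * sin (m * t).
Proof.
  replace ((m - 1) * t) with (m * t - t) by ring.
  replace ((m + 1) * t) with (m * t + t) by ring.
  rewrite cos_minus, cos_plus; ring.
Qed.

Definition weight (x t : R) : R := exp (- 2 * x * sin t).

Ltac continuous_by_derive :=
  intros; cbv beta;
  apply (ex_derive_continuous (K := R_AbsRing) (V := R_NormedModule));
  unfold weight; auto_derive; auto.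

Ltac ex_RInt_by_derive :=
  apply (ex_RInt_continuous (V := R_CompleteNormedModule)); continuous_by_derive.

Lemma continuous_mul_weight (f : R -> R) x t :
  continuous f t -> continuous (fun t => f t * weight x t) t.
Proof.
  intro Hf. apply (continuous_mult (K := R_AbsRing)); [exact Hf | continuous_by_derive].
Qed.

Lemma continuity_2d_pt_snd (f : R -> R) x t :
  continuity_pt f t -> continuity_2d_pt (fun _ v => f v) x t.
Proof.
  intro Hf. apply (continuity_1d_2d_pt_comp f (fun _ v => v)); [exact Hf | apply continuity_2d_pt_id2].
Qed.

Lemma continuity_2d_pt_weight x t : continuity_2d_pt weight x t.
Proof.
  apply (continuity_1d_2d_pt_comp exp (fun u v => - 2 * u * sin v)).
  - apply derivable_continuous_pt, derivable_pt_exp.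
  - repeat apply continuity_2d_pt_mult.
    + apply continuity_2d_pt_const.
    + apply continuity_2d_pt_id1.
    + apply continuity_2d_pt_snd, continuity_sin.
Qed.

Lemma is_derive_RInt_weight (g : R -> R) a b x :
  (forall t, continuous g t) ->
  is_derive (fun y => RInt (fun t => g t * weight y t) a b) x
    (- 2 * RInt (fun t => sin t * g t * weight x t) a b).
Proof.
  intro Hg.
  assert (Hd : forall u t,
             is_derive (fun z => g t * weight z t) u (- 2 * (sin t * g t * weight u t))).
  { intros u t. unfold weight. auto_derive; [auto | ring]. }
  replace (- 2 * RInt (fun t => sin t * g t * weight x t) a b)
    with (RInt (fun t => Derive (fun z => g t * weight z t) x) a b).
  2: { rewrite (RInt_ext (V := R_CompleteNormedModule) _
                  (fun t => scal (- 2) (sin t * g t * weight x t)))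
         by (intros t _; apply is_derive_unique, Hd).
       apply (RInt_scal (V := R_CompleteNormedModule)).
       apply (ex_RInt_continuous (V := R_CompleteNormedModule)); intros t _.
       apply continuous_mul_weight, (continuous_mult (K := R_AbsRing)); [|apply Hg].
       apply continuity_pt_filterlim, continuity_sin. }
  apply (is_derive_RInt_param (fun u t => g t * weight u t)).
  - exists (mkposreal 1 Rlt_0_1); intros y _ t _; eexists; apply Hd.
  - intros t _.
    apply (continuity_2d_pt_ext (fun u v => - 2 * sin v * g v * weight u v)).
    { intros u v; symmetry.
      transitivity (- 2 * (sin v * g v * weight u v)); [apply is_derive_unique, Hd | ring]. }
    repeat apply continuity_2d_pt_mult.
    + apply continuity_2d_pt_const.
    + apply continuity_2d_pt_snd, continuity_sin.
    + apply continuity_2d_pt_snd, continuity_pt_filterlim, Hg.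
    + apply continuity_2d_pt_weight.
  - exists (mkposreal 1 Rlt_0_1); intros y _.
    apply (ex_RInt_continuous (V := R_CompleteNormedModule)); intros t _.
    apply continuous_mul_weight, Hg.
Qed.

Definition sin_moment (k : nat) (m x : R) : R :=
  RInt (fun t => sin t ^ k * sin (m * t) * weight x t) 0 PI.

Lemma is_RInt_sin_moment k m x :
  is_RInt (fun t => sin t ^ k * sin (m * t) * weight x t) 0 PI (sin_moment k m x).
Proof. apply (RInt_correct (V := R_CompleteNormedModule)); ex_RInt_by_derive. Qed.

Lemma is_derive_sin_moment k m x :
  is_derive (sin_moment k m) x (- 2 * sin_moment (S k) m x).
Proof.
  unfold sin_moment.
  replace (RInt (fun t => sin t ^ S k * sin (m * t) * weight x t) 0 PI)
    with (RInt (fun t => sin t * (sin t ^ k * sin (m * t)) * weight x t) 0 PI)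
    by (apply (RInt_ext (V := R_CompleteNormedModule)); intros; simpl; ring).
  apply (is_derive_RInt_weight (fun t => sin t ^ k * sin (m * t))); continuous_by_derive.
Qed.

(* Since W := sin_moment 1 m has W' = -2 sin_moment 2 m and
   W'' = 4 sin_moment 3 m, this is the ODE
   x^2 W'' + 3 x W' - (4 x^2 + m^2 - 1) W = - 4 x sin_moment 0 m. *)
Lemma sin_moment_ode m x : sin (m * PI) = 0 ->
  4 * x ^ 2 * sin_moment 3 m x - 6 * x * sin_moment 2 m x
  - (4 * x ^ 2 + m ^ 2 - 1) * sin_moment 1 m x + 4 * x * sin_moment 0 m x = 0.
Proof.
  intro Hm.
  set (Q := fun t => weight x t * ((2 * x * sin t - 1) * cos t * sin (m * t)
                                   + m * sin t * cos (m * t))).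
  set (T := fun t => (4 * x ^ 2 * sin t ^ 3 - 6 * x * sin t ^ 2
                      - (4 * x ^ 2 + m ^ 2 - 1) * sin t + 4 * x) * sin (m * t) * weight x t).
  assert (HT_exact : is_RInt T 0 PI (minus (Q PI) (Q 0))).
  { apply (is_RInt_derive (V := R_CompleteNormedModule)).
    - intros t _. unfold Q, T, weight. auto_derive; [auto|].
      assert (Hcos2 : cos t ^ 2 = 1 - sin t ^ 2)
        by (rewrite <- (sin2_cos2 t); unfold Rsqr; ring).
      ring_simplify. rewrite Hcos2. ring.
    - unfold T; continuous_by_derive. }
  assert (HT_moments : is_RInt T 0 PI
     (plus (plus (plus (scal (4 * x ^ 2) (sin_moment 3 m x)) (scal (- (6 * x)) (sin_moment 2 m x)))
        (scal (- (4 * x ^ 2 + m ^ 2 - 1)) (sin_moment 1 m x))) (scal (4 * x) (sin_moment 0 m x)))).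
  { eapply is_RInt_ext.
    2: { apply (is_RInt_plus (V := R_NormedModule));
           [apply (is_RInt_plus (V := R_NormedModule));
            [apply (is_RInt_plus (V := R_NormedModule)) |] |];
         apply (is_RInt_scal (V := R_NormedModule)), is_RInt_sin_moment. }
    intros t _. unfold T, plus, scal; simpl; unfold mult; simpl. ring. }
  assert (HQ_PI : Q PI = 0) by (unfold Q; rewrite sin_PI, Hm; ring).
  assert (HQ_0 : Q 0 = 0) by (unfold Q; rewrite Rmult_0_r, sin_0; ring).
  rewrite HQ_PI, HQ_0 in HT_exact.
  pose proof (is_RInt_unique _ _ _ _ HT_exact) as H0.
  rewrite (is_RInt_unique _ _ _ _ HT_moments) in H0.
  unfold minus, plus, opp, scal in H0; simpl in H0; unfold mult in H0; simpl in H0.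
  lra.
Qed.

Lemma sin_moment0_odd_pos n x : 0 < x -> 0 < sin_moment 0 (2 * INR n + 1) x.
Proof.
  intro Hx. set (m := 2 * INR n + 1).
  assert (Hm : 0 < m) by (unfold m; pose proof (pos_INR n); lra).
  pose proof PI_RGT_0.
  set (f := fun t => sin t ^ 0 * sin (m * t) * weight x t).
  unfold sin_moment; fold f.
  rewrite <- (RInt_Chasles (V := R_CompleteNormedModule) f 0 (PI / 2) PI)
    by (unfold f; ex_RInt_by_derive).
  (* integrate by parts on [0, PI/2] and [PI/2, PI] against the primitives
     [(1 - cos (m t)) / m] and [- (1 + cos (m t)) / m] of [sin (m t)]: both
     remainders are nonnegative and the boundary terms add up to
     [2 weight x (PI/2) / m > 0] *)
  set (h1 := fun t => 2 * x * cos t * weight x t * (1 - cos (m * t)) / m).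
  set (h2 := fun t => 2 * x * (- cos t) * weight x t * (1 + cos (m * t)) / m).
  rewrite (RInt_antiderivative_remainder f (fun t => weight x t * (1 - cos (m * t)) / m) h1),
    (RInt_antiderivative_remainder f (fun t => - (weight x t * (1 + cos (m * t)) / m)) h2).
  2, 5: intro t; unfold f, h1, h2, weight; auto_derive; [auto | field; lra].
  2-5: unfold f, h1, h2; continuous_by_derive.
  assert (Hh1 : 0 <= RInt h1 0 (PI / 2)).
  { apply RInt_ge_0; [lra | unfold h1; ex_RInt_by_derive |].
    intros t Ht. unfold h1, weight.
    pose proof (cos_ge_0 t ltac:(lra) ltac:(lra)). pose proof (COS_bound (m * t)).
    pose proof (exp_pos (- 2 * x * sin t)).
    apply Rdiv_le_0_compat; [|lra].
    repeat apply Rmult_le_pos; lra. }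
  assert (Hh2 : 0 <= RInt h2 (PI / 2) PI).
  { apply RInt_ge_0; [lra | unfold h2; ex_RInt_by_derive |].
    intros t Ht. unfold h2, weight.
    pose proof (cos_le_0 t ltac:(lra) ltac:(lra)). pose proof (COS_bound (m * t)).
    pose proof (exp_pos (- 2 * x * sin t)).
    apply Rdiv_le_0_compat; [|lra].
    repeat apply Rmult_le_pos; lra. }
  assert (Hcos_half : cos (m * (PI / 2)) = 0) by apply cos_odd_mult_PI2.
  assert (Hcos_end : cos (m * PI) = -1) by apply cos_odd_mult_PI.
  assert (0 < weight x (PI / 2) / m) by (apply Rdiv_lt_0_compat; [apply exp_pos | lra]).
  rewrite Hcos_half, Hcos_end, Rmult_0_r, cos_0.
  unfold plus; simpl. lra.
Qed.

Lemma sin_moment1_odd_at_0 n : (1 <= n)%nat -> sin_moment 1 (2 * INR n + 1) 0 = 0.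
Proof.
  intro Hn. assert (HnR : 1 <= INR n) by (apply (le_INR 1); exact Hn).
  unfold sin_moment.
  rewrite (RInt_antiderivative_remainder _
             (fun t => (sin (2 * INR n * t) / (2 * INR n)
                        - sin ((2 * INR n + 2) * t) / (2 * INR n + 2)) / 2) (fun _ => 0)).
  - rewrite RInt_const, !Rmult_0_r, sin_0, sin_even_mult_PI.
    replace ((2 * INR n + 2) * PI) with (2 * INR (S n) * PI) by (rewrite S_INR; ring).
    rewrite sin_even_mult_PI. unfold scal; simpl; unfold mult; simpl. field; lra.
  - intro t. auto_derive; [easy|].
    pose proof (cos_sub_cos (2 * INR n + 1) t) as Hcos.
    replace (2 * INR n + 1 - 1) with (2 * INR n) in Hcos by ring.
    replace (2 * INR n + 1 + 1) with (2 * INR n + 2) in Hcos by ring.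
    transitivity ((cos (2 * INR n * t) - cos ((2 * INR n + 2) * t)) / 2); [field; lra|].
    unfold weight. rewrite Hcos, Rmult_0_r, Rmult_0_l, exp_0. simpl; field.
  - continuous_by_derive.
  - intros; apply continuous_const.
Qed.

Lemma mul_exp_neg_le_1 u : 0 <= u -> u * exp (- u) <= 1.
Proof.
  intro Hu. pose proof (exp_ineq1_le u). pose proof (exp_pos (- u)).
  assert (exp u * exp (- u) = 1) by (rewrite <- exp_plus, Rplus_opp_r; apply exp_0).
  nra.
Qed.

Lemma Rabs_sin_moment1_le m x : 0 < x -> Rabs (sin_moment 1 m x) <= PI / 2 / x.
Proof.
  intro Hx. unfold sin_moment. pose proof PI_RGT_0.
  replace (PI / 2 / x) with ((PI - 0) * / (2 * x)) by (field; lra).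
  apply abs_RInt_le_const; [lra | ex_RInt_by_derive |].
  intros t Ht. assert (Hsin : 0 <= sin t) by (apply sin_ge_0; lra).
  assert (Hsin_m : Rabs (sin (m * t)) <= 1) by (apply Rabs_le, SIN_bound).
  (* [sin t * weight x t = u e^(-u) / (2 x)] with [u = 2 x sin t] *)
  assert (Hdecay : sin t * weight x t <= / (2 * x)).
  { pose proof (mul_exp_neg_le_1 (2 * x * sin t) ltac:(nra)) as Hu.
    replace (- (2 * x * sin t)) with (- 2 * x * sin t) in Hu by ring.
    apply (Rmult_le_reg_l (2 * x)); [lra|]. rewrite Rinv_r by lra.
    unfold weight; nra. }
  assert (0 <= sin t * weight x t) by (apply Rmult_le_pos; [lra | left; apply exp_pos]).
  replace (sin t ^ 1 * sin (m * t) * weight x t) with (sin t * weight x t * sin (m * t))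
    by (simpl; ring).
  rewrite Rabs_mult, (Rabs_right (sin t * weight x t)) by lra.
  pose proof (Rabs_pos (sin (m * t))).
  nra.
Qed.

Lemma sin_moment1_odd_pos n x : (1 <= n)%nat -> 0 < x -> 0 < sin_moment 1 (2 * INR n + 1) x.
Proof.
  intros Hn Hx. set (m := 2 * INR n + 1).
  assert (Hm : 1 <= m ^ 2) by (unfold m; pose proof (pos_INR n); nra).
  apply (pos_of_vanishing_at_0_and_infinity (sin_moment 1 m)
           (fun y => - 2 * sin_moment 2 m y) (fun y => 4 * sin_moment 3 m y))
    with (C := PI / 2).
  - intro y; apply is_derive_sin_moment.
  - intro y. replace (4 * sin_moment 3 m y) with (- 2 * (- 2 * sin_moment 3 m y)) by ring.
    apply is_derive_scal, is_derive_sin_moment.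
  - intros y Hy Hcrit Hnonpos; cbv beta in *.
    pose proof (sin_moment_ode m y (sin_odd_mult_PI n)) as Hode.
    pose proof (sin_moment0_odd_pos n y Hy) as HP; fold m in HP.
    assert ((4 * y ^ 2 + m ^ 2 - 1) * sin_moment 1 m y <= 0) by nra.
    assert (0 < y ^ 2) by nra.
    nra.
  - apply sin_moment1_odd_at_0, Hn.
  - intros y Hy; apply Rabs_sin_moment1_le, Hy.
  - exact Hx.
Qed.

Definition phi_re (n : nat) (x : R) : R :=
  RInt (fun t => cos (2 * INR n * t) * weight x t) 0 PI.

Definition phi_im (n : nat) (x : R) : R :=
  RInt (fun t => sin (2 * INR n * t) * weight x t) 0 PI.

Lemma phi_eq n x : phi n x = (phi_re n x, phi_im n x).
Proof.
  unfold phi. apply (is_RInt_unique (V := C_R_CompleteNormedModule)).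
  apply (is_RInt_fct_extend_pair (U := R_NormedModule) (V := R_NormedModule)).
  - apply (is_RInt_ext (fun t => cos (2 * INR n * t) * weight x t));
      [intros t _; unfold phi_integrand, weight; simpl; ring |].
    apply (RInt_correct (V := R_CompleteNormedModule)); ex_RInt_by_derive.
  - apply (is_RInt_ext (fun t => sin (2 * INR n * t) * weight x t));
      [intros t _; unfold phi_integrand, weight; simpl; ring |].
    apply (RInt_correct (V := R_CompleteNormedModule)); ex_RInt_by_derive.
Qed.

Lemma phi_im_eq0 n x : phi_im n x = 0.
Proof.
  unfold phi_im. set (f := fun t => sin (2 * INR n * t) * weight x t).
  assert (Hf : forall a b, ex_RInt f a b) by (intros; unfold f; ex_RInt_by_derive).
  (* the substitution [t -> PI - t] maps the integrand [f] to [- f] *)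
  assert (Hsym : RInt f 0 PI = RInt f PI 0).
  { pose proof (RInt_comp_lin (V := R_CompleteNormedModule) f (-1) PI 0 PI) as Hlin.
    replace (-1 * 0 + PI) with PI in Hlin by ring.
    replace (-1 * PI + PI) with 0 in Hlin by ring.
    rewrite <- (Hlin (Hf _ _)).
    apply (RInt_ext (V := R_CompleteNormedModule)). intros t _.
    unfold f, weight, scal; simpl; unfold mult; simpl.
    replace (-1 * t + PI) with (PI - t) by ring. rewrite sin_PI_x.
    replace (2 * INR n * (PI - t)) with (2 * INR n * PI - 2 * INR n * t) by ring.
    rewrite sin_minus, sin_even_mult_PI, cos_even_mult_PI. ring. }
  rewrite <- (opp_RInt_swap (V := R_CompleteNormedModule) f PI 0 (Hf _ _)) in Hsym |- *.
  unfold opp in Hsym |- *; simpl in Hsym |- *. lra.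
Qed.

Lemma phi_re_pos n x : (1 <= n)%nat -> 0 < x -> 0 < phi_re n x.
Proof.
  intros Hn Hx. assert (HnR : 1 <= INR n) by (apply (le_INR 1); exact Hn).
  pose proof PI_RGT_0.
  set (h := fun t => (2 * x * sin t + 4 * x ^ 2 * cos t ^ 2) * weight x t
                     * (1 - cos (2 * INR n * t)) / (4 * INR n ^ 2)).
  unfold phi_re.
  (* two integrations by parts; the remainder [h] is nonnegative, and positive
     on (0, PI / (2 n)) *)
  rewrite (RInt_antiderivative_remainder _
             (fun t => weight x t * (sin (2 * INR n * t) / (2 * INR n)
                        + 2 * x * cos t * (1 - cos (2 * INR n * t)) / (4 * INR n ^ 2))) h).
  2: intro t; unfold h, weight; auto_derive; [repeat split; nra | field; lra].
  2, 3: unfold h; continuous_by_derive.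
  rewrite sin_even_mult_PI, cos_even_mult_PI, Rmult_0_r, sin_0, cos_0.
  set (c := PI / (2 * INR n)).
  assert (Hc : 0 < c <= PI).
  { unfold c; split; [apply Rdiv_lt_0_compat; lra|].
    apply Rle_div_l; nra. }
  assert (Hc_end : 2 * INR n * c = PI) by (unfold c; field; lra).
  rewrite <- (RInt_Chasles (V := R_CompleteNormedModule) h 0 c PI)
    by (unfold h; ex_RInt_by_derive).
  assert (Hh_pos : 0 < RInt h 0 c).
  { apply RInt_gt_0; [lra | | unfold h; continuous_by_derive].
    intros t Ht. unfold h, weight.
    assert (0 < sin t) by (apply sin_gt_0; lra).
    assert (2 * INR n * t < PI) by (rewrite <- Hc_end; nra).
    assert (cos (2 * INR n * t) < 1)
      by (rewrite <- cos_0; apply cos_decreasing_1; nra).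
    pose proof (exp_pos (- 2 * x * sin t)).
    apply Rdiv_lt_0_compat; [|nra].
    apply Rmult_lt_0_compat; [|lra]. apply Rmult_lt_0_compat; [|lra]. nra. }
  assert (Hh_nonneg : 0 <= RInt h c PI).
  { apply RInt_ge_0; [lra | unfold h; ex_RInt_by_derive |].
    intros t Ht. unfold h, weight.
    assert (0 <= sin t) by (apply sin_ge_0; lra).
    pose proof (COS_bound (2 * INR n * t)).
    pose proof (exp_pos (- 2 * x * sin t)).
    apply Rdiv_le_0_compat; [|nra].
    apply Rmult_le_pos; [|lra]. apply Rmult_le_pos; [|lra]. nra. }
  unfold plus; simpl.
  match goal with |- 0 < ?boundary + _ => replace boundary with 0 by (field; lra) end.
  lra.
Qed.

Lemma phi_re_sub_succ n x :
  phi_re n x - phi_re (S n) x = 2 * sin_moment 1 (2 * INR n + 1) x.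
Proof.
  unfold phi_re, sin_moment.
  rewrite <- (RInt_minus (V := R_CompleteNormedModule)) by ex_RInt_by_derive.
  rewrite <- (RInt_scal (V := R_CompleteNormedModule)) by ex_RInt_by_derive.
  apply (RInt_ext (V := R_CompleteNormedModule)). intros t _.
  pose proof (cos_sub_cos (2 * INR n + 1) t) as Hcos.
  replace (2 * INR n + 1 - 1) with (2 * INR n) in Hcos by ring.
  replace (2 * INR n + 1 + 1) with (2 * (INR n + 1)) in Hcos by ring.
  rewrite S_INR. unfold minus, plus, opp, scal; simpl; unfold mult; simpl.
  transitivity ((cos (2 * INR n * t) - cos (2 * (INR n + 1) * t)) * weight x t); [ring|].
  rewrite Hcos; ring.
Qed.

Theorem proposition3p2 :
  (forall (n : nat) (x : R), (1 <= n)%nat -> 0 < x ->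
     Im (phi n x) = 0 /\ 0 < Re (phi n x)) /\
  (forall (x : R), 0 < x ->
     forall (n : nat), (1 <= n)%nat -> Re (phi (S n) x) < Re (phi n x)).
Proof.
  split.
  - intros n x Hn Hx. rewrite phi_eq; simpl.
    split; [apply phi_im_eq0 | apply phi_re_pos; assumption].
  - intros x Hx n Hn. rewrite !phi_eq; simpl.
    pose proof (phi_re_sub_succ n x).
    pose proof (sin_moment1_odd_pos n x Hn Hx).
    lra.
Qed.
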